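(* Let $d\in D^\times$ with $\rho(d)=d$, and let $F'\subseteq D$ be a subfield containing $F$, fixed pointwise by $\rho$, such that $F[d]|F$ and $F'|F$ are $F$-isomorphic. Then there is $g\in D^\times$ with $gF[d]\rho(g)=F'$. Moreover, if $d\notin F$, every $g\in D^\times$ with $gF[d]g^{-1}=F'$ satisfies $gF[d]\rho(g)=F'$.
   Context: $F$ is a non-archimedean local field of odd residue characteristic. $D$ is a non-split quaternion division algebra with centre $F$, and $\rho$ is an orthogonal anti-involution of $D$ (an $F$-linear involutive anti-automorphism with $3$-dimensional fixed space). *)

From HB Require Import structures.
From mathcomp Require Import all_boot all_order all_algebra all_field.
Set Implicit Arguments. Unset Strict Implicit. Unset Printing Implicit Defensive.
Import Order.TTheory GRing.Theory Num.Theory.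
Local Open Scope ring_scope.

(* ---------- Non-archimedean local fields, via a normalized discrete valuation.
   v x is only meaningful for x != 0 (v 0 is junk). *)
Definition discrete_valuation (F : fieldType) (v : F -> int) : Prop :=
  [/\ forall x y : F, x != 0 -> y != 0 -> v (x * y) = v x + v y,
      forall x y : F, x != 0 -> y != 0 -> x + y != 0 ->
         (v x <= v (x + y)) || (v y <= v (x + y))
    & exists pi : F, pi != 0 /\ v pi = 1].

Definition in_valring (F : fieldType) (v : F -> int) (x : F) : Prop :=
  x = 0 \/ 0 <= v x.
Definition in_maxideal (F : fieldType) (v : F -> int) (x : F) : Prop :=
  x = 0 \/ 0 < v x.

Definition v_complete (F : fieldType) (v : F -> int) : Prop :=
  forall u : nat -> F,
    (forall N : int, exists n0 : nat, forall m n : nat, (n0 <= m)%N -> (n0 <= n)%N ->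
        u m - u n = 0 \/ N <= v (u m - u n)) ->
    exists l : F, forall N : int, exists n0 : nat, forall n : nat, (n0 <= n)%N ->
        u n - l = 0 \/ N <= v (u n - l).

Definition finite_residue_field (F : fieldType) (v : F -> int) : Prop :=
  exists s : seq F, (forall r, r \in s -> in_valring v r) /\
    forall x, in_valring v x -> exists2 r, r \in s & in_maxideal v (x - r).

Definition nonarch_local_field (F : fieldType) (v : F -> int) : Prop :=
  [/\ discrete_valuation v, v_complete v & finite_residue_field v].

Definition odd_residue_char (F : fieldType) (v : F -> int) : Prop :=
  ~ in_maxideal v (2%:R : F).

Definition quaternion_division_algebra (F : fieldType) (D : falgType F) : Prop :=
  [/\ \dim {: D} = 4%N,
      (forall x : D, x != 0 -> x \is a GRing.unit)
    & forall z : D, (forall x : D, z * x = x * z) -> z \in (1%VS : {vspace D})].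

Definition orthogonal_anti_involution (F : fieldType) (D : falgType F)
    (rho : 'End(D)) : Prop :=
  [/\ forall x y : D, rho (x * y) = rho y * rho x,
      forall x : D, rho (rho x) = x
    & \dim (fixedSpace rho) = 3%N].

Definition is_subfield (F : fieldType) (D : falgType F) (K : {vspace D}) : Prop :=
  [/\ (1 : D) \in K,
      forall x y : D, x \in K -> y \in K -> x * y \in K,
      forall x y : D, x \in K -> y \in K -> x * y = y * x
    & forall x : D, x \in K -> x != 0 -> x \is a GRing.unit /\ x^-1 \in K].

Definition F_isomorphic (F : fieldType) (D : falgType F) (E K : {vspace D}) : Prop :=
  exists f : 'End(D), [/\ ahom_in E f, {in E &, injective f} & (f @: E)%VS = K].

Definition twisted_eq (F : fieldType) (D : falgType F) (g h : D) (E K : {vspace D}) : Prop :=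
  forall y : D, y \in K <-> exists2 x : D, x \in E & y = g * x * h.

From HB Require Import structures.
From mathcomp Require Import all_boot all_order all_algebra all_field.
Set Implicit Arguments. Unset Strict Implicit. Unset Printing Implicit Defensive.
Import GRing.Theory.
Local Open Scope ring_scope.

(* Write K = F[d].  If d is in F, take g = 1.  Otherwise the minimal polynomial
   X^2 - bX - a of d over F is also that of e = f d, where f : K -> F' is the
   given F-isomorphism, and x |-> e x + x d - b x maps D into the intertwiners
   {g | e g = g d}; as d is not central, this map is nonzero, so some unit g
   conjugates K onto F' (Skolem-Noether for quadratic subfields).  Finally, if
   g K g^-1 = F' is fixed by rho then c = rho(g) g centralises d, and in a
   quaternion algebra the centraliser of a non-central d is K itself; hence
   rho(g) = c g^-1 with c in K^x, and g K rho(g) = g K g^-1 = F'. *)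

Section AntiInvolution.

Variables (R : unitRingType) (rho : R -> R).
Hypotheses (rhoM : forall x y, rho (x * y) = rho y * rho x) (rhoK : involutive rho).

Lemma anti_involution1 : rho 1 = 1.
Proof. by have := rhoM (rho 1) 1; rewrite mulr1 rhoK mulr1. Qed.

Lemma anti_involution_unit g : g \is a GRing.unit -> rho g \is a GRing.unit.
Proof.
move=> Ug; apply/unitrP; exists (rho g^-1).
by rewrite -!rhoM mulVr ?mulrV ?anti_involution1.
Qed.

Lemma anti_involutionV g : g \is a GRing.unit -> rho g^-1 = (rho g)^-1.
Proof.
move=> Ug; apply: (mulrI (anti_involution_unit Ug)).
by rewrite -rhoM mulVr ?mulrV ?anti_involution_unit ?anti_involution1.
Qed.

End AntiInvolution.

Section Falgebra.

Variables (F : fieldType) (D : falgType F).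
Implicit Types (d e g h c : D) (K E : {vspace D}).

Lemma dim_add1_line d : d \notin (1%VS : {vspace D}) -> \dim (1 + <[d]>) = 2.
Proof.
move=> d1; apply/eqP; rewrite eqn_leq; apply/andP; split.
  by rewrite (leq_trans (dimv_add_leqif _ _)) // dimv1 dim_vline; case: (d != 0).
have [le1 eq1] := dimv_leqif_eq (addvSl 1 <[d]>).
rewrite dimv1 in le1 eq1; rewrite ltn_neqAle le1 andbT eq1.
by apply: contra d1 => /eqP ->; rewrite memvE addvSr.
Qed.

Lemma adjoin1_sub_cent1 d : (<<1; d>> <= 'C[d])%VS.
Proof.
apply: agenv_sub_modl; first by rewrite -memvE cent1v1.
by apply: prodv_sub; rewrite // subv_add -!memvE cent1v1 cent1v_id.
Qed.

Lemma adjoin1_line1 d : d \in (1%VS : {vspace D}) -> <<1; d>>%VS = 1%VS.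
Proof.
move=> d1; apply/eqP; rewrite eqEsubv sub1_agenv andbT.
by apply: agenv_sub_modl; rewrite // prodv1 subv_add subvv -memvE.
Qed.

Lemma twisted_eq_img g h E (f : 'End(D)) :
  {in E, forall x, g * x * h = f x} -> twisted_eq g h E (f @: E).
Proof.
move=> gEh y; split; first by case/memv_imgP=> x Ex ->; exists x; rewrite ?gEh.
by case=> x Ex ->; rewrite gEh ?memv_img.
Qed.

Lemma twisted_eq_mulr (K : {aspace D}) E g h c :
  c \in K -> c \is a GRing.unit ->
  twisted_eq g h K E -> twisted_eq g (c * h) K E.
Proof.
move=> Kc Uc gKh y; split.
  case/gKh=> x Kx ->; exists (x * c^-1); first by rewrite memvM ?memvV.
  by rewrite -!mulrA mulKr.
by case=> x Kx ->; apply/gKh; exists (x * c); rewrite ?memvM // !mulrA.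
Qed.

Lemma intertwine_same_quadratic d e x (a b : F) :
  d * d = a *: 1 + b *: d -> e * e = a *: 1 + b *: e ->
  e * (e * x + x * d - b *: x) = (e * x + x * d - b *: x) * d.
Proof.
move=> dd ee; rewrite mulrBr mulrDr mulrA ee mulrBl mulrDl mulrDl -(mulrA x d d) dd.
rewrite mulrDr mulr_algl mulr_algr -!scalerAl -!scalerAr !mulrA.
by rewrite addrA addrK (addrAC (a *: x)) addrK addrC.
Qed.

End Falgebra.

Section Quaternion.

Variables (F : fieldType) (D : falgType F).
Hypothesis hD : quaternion_division_algebra D.
Implicit Types (d e g c : D).

Lemma quaternion_field_axiom : GRing.field_axiom D.
Proof. by case: hD. Qed.

Lemma quaternion_noncentral d :
  d \notin (1%VS : {vspace D}) -> exists x, x * d != d * x.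
Proof.
case: hD => _ _ central d1.
have /subvPn[x _ Cx] : ~~ (fullv <= 'C[d])%VS.
  apply: contra d1 => /subvP Cd; apply: central => x.
  by have /cent1vP-> := Cd x (memvf x).
by exists x; apply: contra Cx => /eqP/cent1vP.
Qed.

Lemma dim_cent1_le2 d : d \notin (1%VS : {vspace D}) -> (\dim 'C[d] <= 2)%N.
Proof.
case: (hD) => dimD _ central d1.
have CD4 : (\dim 'C[d] %| 4)%N.
  by rewrite -dimD (@skew_field_dimS _ _ quaternion_field_axiom _ (aspacef D)) ?subvf.
have CD_neq4 : \dim 'C[d] != 4%N.
  apply: contra d1 => /eqP CD; apply: central => x; apply/esym/cent1vP.
  have /eqP -> : ('C[d] == fullv)%VS by rewrite eqEdim subvf CD dimD.
  exact: memvf.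
have : (\dim 'C[d] <= 4)%N by rewrite -dimD dimvS ?subvf.
by move: CD4 CD_neq4; case: (\dim _) => [|[|[|[|[|]]]]].
Qed.

Lemma cent1_adjoin1 d : d \notin (1%VS : {vspace D}) ->
  'C[d]%VS = (1 + <[d]>)%VS /\ <<1; d>>%VS = (1 + <[d]>)%VS.
Proof.
move=> d1; have sLK := sub_agenv (1 + <[d]>)%VS.
have sKC := adjoin1_sub_cent1 d.
have CL : 'C[d]%VS = (1 + <[d]>)%VS.
  apply/eqP; rewrite eq_sym eqEdim (subv_trans sLK sKC) dim_add1_line //.
  exact: dim_cent1_le2.
by split=> //; apply/eqP; rewrite eqEsubv sLK andbT (subv_trans sKC) // CL.
Qed.

Lemma commute_adjoin1 d c : d \notin (1%VS : {vspace D}) ->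
  c * d = d * c -> c \in <<1; d>>%VS.
Proof. by move=> d1 /cent1vP; case: (cent1_adjoin1 d1) => -> ->. Qed.

Lemma exists_intertwiner d e (a b : F) : d \notin (1%VS : {vspace D}) ->
  d * d = a *: 1 + b *: d -> e * e = a *: 1 + b *: e ->
  exists2 g, g \is a GRing.unit & e * g = g * d.
Proof.
move=> d1 dd ee; pose t x := e * x + x * d - b *: x.
suff [x tx_neq0] : exists x, t x != 0.
  exists (t x); first exact: quaternion_field_axiom.
  exact: (intertwine_same_quadratic x dd ee).
have [x0 x0d] := quaternion_noncentral d1.
have [t1 | t1] := eqVneq (t 1) 0; last by exists 1.
(* t 1 = 0 means e = b - d, so that t x0 is the commutator of x0 and d *)
suff tx0 : t x0 = x0 * d - d * x0 by exists x0; rewrite tx0 subr_eq0.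
rewrite -[t x0]subr0 -(mul0r x0) -t1 /t mulr1 mul1r !mulrBl !mulrDl -scalerAl.
by rewrite mul1r opprB addrA addrNK opprD addrA (addrAC (e * x0)) subrr add0r.
Qed.

Lemma skolem_noether_adjoin1 d (f : 'End(D)) : d \notin (1%VS : {vspace D}) ->
  ahom_in <<1; d>>%VS f ->
  exists2 g, g \is a GRing.unit & {in <<1; d>>%VS, forall x, g * x * g^-1 = f x}.
Proof.
move=> d1 /ahom_inP[fM f1]; have [_ K_eq] := cent1_adjoin1 d1.
have Kd : d \in <<1; d>>%VS := memv_adjoin _ _.
have /memv_addP[_ /vlineP[a ->] [_ /vlineP[b ->] dd]] : d * d \in (1 + <[d]>)%VS.
  by rewrite -K_eq memvM.
have ee : f d * f d = a *: 1 + b *: f d by rewrite -fM // dd linearD !linearZ /= f1.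
have [g Ug gd] := exists_intertwiner d1 dd ee.
exists g => //; rewrite K_eq => _ /memv_addP[_ /vlineP[k ->] [_ /vlineP[l ->] ->]].
rewrite linearD !linearZ /= f1 mulrDr mulrDl -!scalerAr -!scalerAl mulr1 divrr //.
by rewrite -gd mulrK.
Qed.

Variable rho : 'End(D).
Hypothesis hrho : orthogonal_anti_involution rho.

Lemma conj_twisted_rho d (F' : {vspace D}) g :
  d \notin (1%VS : {vspace D}) -> rho d = d -> {in F', forall x, rho x = x} ->
  g \is a GRing.unit -> twisted_eq g g^-1 <<1; d>>%VS F' ->
  twisted_eq g (rho g) <<1; d>>%VS F'.
Proof.
case: hrho => rhoM rhoK _ d1 rhod fixF' Ug gKg.
have Urg := anti_involution_unit rhoM rhoK Ug.
have F'gdg : g * d * g^-1 \in F' by apply/gKg; exists d; rewrite ?memv_adjoin.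
have c_d : rho g * g * d = d * (rho g * g).
  have := fixF' _ F'gdg; rewrite !rhoM rhod (anti_involutionV rhoM rhoK Ug) => e.
  by rewrite mulrA -[d * rho g](mulVKr Urg) e !mulrA divrK.
rewrite -[rho g](mulrK Ug).
apply: twisted_eq_mulr gKg; first exact: commute_adjoin1.
by rewrite unitrMr.
Qed.

End Quaternion.

Theorem lemma2p2 (F : fieldType) (v : F -> int) (D : falgType F) (rho : 'End(D))
    (hF : nonarch_local_field v) (hodd : odd_residue_char v)
    (hD : quaternion_division_algebra D) (hrho : orthogonal_anti_involution rho)
    (d : D) (hdu : d \is a GRing.unit) (hdrho : rho d = d)
    (F' : {vspace D}) (hF' : is_subfield F')
    (hF'rho : forall x : D, x \in F' -> rho x = x)
    (hiso : F_isomorphic <<1%VS; d>>%VS F') :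
  (exists2 g : D, g \is a GRing.unit & twisted_eq g (rho g) <<1%VS; d>>%VS F') /\
  (d \notin (1%VS : {vspace D}) ->
     forall g : D, g \is a GRing.unit ->
       twisted_eq g g^-1 <<1%VS; d>>%VS F' ->
       twisted_eq g (rho g) <<1%VS; d>>%VS F').
Proof.
split; last by move=> d1 g; apply: conj_twisted_rho.
have [f [fhom _ fK]] := hiso.
have [d1 | d1] := boolP (d \in (1%VS : {vspace D})).
  have [rhoM rhoK _] := hrho; have [_ f1] := ahom_inP fhom.
  exists 1; rewrite ?unitr1 // anti_involution1 // -fK; apply: twisted_eq_img.
  by rewrite adjoin1_line1 // => _ /vlineP[k ->]; rewrite mul1r mulr1 linearZ /= f1.
have [g Ug gKg] := skolem_noether_adjoin1 hD d1 fhom.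
by exists g => //; apply: conj_twisted_rho => //; rewrite -fK; apply: twisted_eq_img.
Qed.
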